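(* Let $0<\lambda_l<\lambda_u$ and let $n=T_{k+1}-T_k\ge 1$ be an integer. For $\eta=(\eta_{T_k+1},\dots,\eta_{T_{k+1}})\in\mathbb{R}^n$ define $$F(\eta)=\max_{\lambda\in[\lambda_l,\lambda_u]}\ \prod_{t=T_k+1}^{T_{k+1}}\Bigl[1-\Bigl(\bigl(\tfrac{1}{\lambda_l}-\tfrac{1}{\lambda_u}\bigr)\eta_t+\tfrac{1}{\lambda_u}\Bigr)\lambda\Bigr]^2 .$$ Set $\varphi=2\lambda_u/\lambda_l$, $\eta_{\max}=1$, $\eta_{\min}=0$. Then the UBA learning rates $$\eta^*_t=\frac{2\bigl(1+\cos\theta_t\bigr)}{2\varphi+(2-\varphi)\bigl(1+\cos\theta_t\bigr)},\qquad \theta_t=\frac{(2(t-T_k)-1)\pi}{2(T_{k+1}-T_k)},\quad t=T_k+1,\dots,T_{k+1},$$ (equivalently $\eta^*_t=\frac{1+\cos\theta_t}{2\kappa-(\kappa-1)(1+\cos\theta_t)}$ with $\kappa=\lambda_u/\lambda_l$) satisfy $\eta^*\in[0,1]^n$ and $F(\eta^* )=\min_{\eta\in\mathbb{R}^n}F(\eta)$, i.e. $\eta^*$ is an exact minimizer of this min-max problem.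
   Context: This is the ''UBA schedule'' $\eta_t=(\eta_{\max}-\eta_{\min})\frac{2(1+\cos\theta_t)}{2\varphi+(2-\varphi)(1+\cos\theta_t)}+\eta_{\min}$ on the phase $t\in\{T_k+1,\dots,T_{k+1}\}$, specialized to $\eta_{\max}=1,\eta_{\min}=0$. The quantity inside the objective is a polynomial in $\lambda$ of degree at most $n$ taking the value $1$ at $\lambda=0$. *)

From HB Require Import structures.
From mathcomp Require Import all_boot all_order all_algebra.
From mathcomp Require Import all_classical all_reals all_analysis.
Set Implicit Arguments. Unset Strict Implicit. Unset Printing Implicit Defensive.
Import Order.TTheory GRing.Theory Num.Theory.
Local Open Scope classical_set_scope.
Local Open Scope ring_scope.

(* The phase t = T_k+1, ..., T_{k+1} is indexed by i : 'I_n with t = T_k + 1 + i,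
   n = T_{k+1} - T_k. *)

Definition uba_obj (R : realType) (ll lu : R) (n : nat) (eta : 'I_n -> R) (lam : R) : R :=
  \prod_(i < n) (1 - ((ll^-1 - lu^-1) * eta i + lu^-1) * lam) ^+ 2.

(* F(eta) = max over lambda in [ll, lu] (the max is attained; we use sup) *)
Definition uba_F (R : realType) (ll lu : R) (n : nat) (eta : 'I_n -> R) : R :=
  sup [set uba_obj ll lu eta lam | lam in `[ll, lu]%classic].

(* theta_t with t - T_k = i + 1 *)
Definition uba_theta (R : realType) (n : nat) (i : 'I_n) : R :=
  ((2 * (i.+1)%:R - 1) * pi) / (2 * n%:R).

Definition uba_eta (R : realType) (ll lu : R) (n : nat) : 'I_n -> R := fun (i : 'I_n) =>
  let phi := 2 * lu / ll in
  (2 * (1 + cos (uba_theta R i))) / (2 * phi + (2 - phi) * (1 + cos (uba_theta R i))).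

Arguments uba_eta {R} ll lu n i.

From mathcomp Require Import all_boot all_order all_algebra.
From mathcomp Require Import all_classical all_reals all_analysis.
From mathcomp Require Import ring lra zify polyrcf.
Import Order.TTheory GRing.Theory Num.Theory numFieldNormedType.Exports.
Set Implicit Arguments.
Unset Strict Implicit.
Unset Printing Implicit Defensive.
Local Open Scope ring_scope.

(* The objective is the square of the residual polynomial
   P_eta(lam) = prod_t (1 - a_t lam), a_t = (1/ll - 1/lu) eta_t + 1/lu, of degree
   <= n with P_eta(0) = 1.  For the UBA rates the 1/a_t are exactly the Chebyshev
   nodes of [ll, lu], so their residual polynomial is K T_n(x(lam)), with x the
   affine map of [ll, lu] onto [-1, 1]: its F-value is K^2, and it takes the values
   +-K alternately at the n+1 extremal points of T_n.  If some P_eta had square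
   < K^2 at all of these, the difference of the two residual polynomials would
   change sign n times in (0, +oo) and vanish at 0: n+1 roots at degree <= n, so it
   would be 0, which is absurd. *)

Fixpoint chebyshev_pair (R : nzRingType) (n : nat) : {poly R} * {poly R} :=
  if n is n'.+1 then
    let: (p, q) := chebyshev_pair R n' in (q, 'X * q *+ 2 - p)
  else (1, 'X).

Definition chebyshev (R : nzRingType) (n : nat) : {poly R} := (chebyshev_pair R n).1.

Lemma chebyshevSS (R : nzRingType) n :
  chebyshev R n.+2 = 'X * chebyshev R n.+1 *+ 2 - chebyshev R n.
Proof. by rewrite /chebyshev /=; case: (chebyshev_pair R n). Qed.

Lemma size_chebyshev (R : nzRingType) n : (size (chebyshev R n) <= n.+1)%N.
Proof.
elim/ltn_ind: n => -[|[|n]] IH; first by rewrite size_poly1.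
  by rewrite size_polyX.
have IHn := IH n (leqnSn _); have IHn1 := IH n.+1 (ltnSn _).
rewrite chebyshevSS (leq_trans (size_polyD _ _)) // geq_max size_polyN.
rewrite (leq_trans IHn (leqW (leqnSn _))) andbT mulr2n (leq_trans (size_polyD _ _)) //.
by rewrite geq_max andbb (leq_trans (size_mul_leq _ _)) // size_polyX.
Qed.

Lemma horner_chebyshev_cos (R : realType) n (x : R) :
  (chebyshev R n).[cos x] = cos (n%:R * x).
Proof.
elim/ltn_ind: n => -[|[|n]] IH.
- by rewrite hornerC mul0r cos0.
- by rewrite hornerX mul1r.
rewrite chebyshevSS !hornerE !IH //.
have -> : n.+2%:R * x = n.+1%:R * x + x by rewrite -addn1 natrD mulrDl mul1r.
have -> : n%:R * x = n.+1%:R * x - x by rewrite -addn1 natrD mulrDl mul1r addrK.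
rewrite cosB cosD; ring.
Qed.

Lemma cos_natmulpi (R : realType) (j : nat) : cos (j%:R * pi) = (-1) ^+ j :> R.
Proof.
elim: j => [|j IH]; first by rewrite mul0r cos0.
by rewrite -addn1 natrD mulrDl mul1r cosDpi IH exprD mulrN1.
Qed.

Lemma cos_itv (R : realType) (x : R) : -1 <= cos x <= 1.
Proof. by rewrite cos_geN1 cos_le1. Qed.

Lemma sin_natmulpi (R : realType) (j : nat) : sin (j%:R * pi) = 0 :> R.
Proof.
elim: j => [|j IH]; first by rewrite mul0r sin0.
by rewrite -addn1 natrD mulrDl mul1r sinDpi IH oppr0.
Qed.

Section ChebyshevNodes.
Variables (R : realType) (n : nat).

Lemma uba_thetaE (i : 'I_n) : uba_theta R i = (i.*2.+1)%:R * pi / (2 * n%:R).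
Proof. by rewrite /uba_theta -mul2n !mulrS natrM; congr (_ * _ / _); ring. Qed.

Lemma uba_theta_itv (i : 'I_n) : uba_theta R i \in `[0, pi].
Proof.
have n_gt0 : 0 < n%:R :> R by rewrite ltr0n (leq_ltn_trans _ (ltn_ord i)).
rewrite uba_thetaE in_itv /= divr_ge0 ?mulr_ge0 ?pi_ge0 //=.
rewrite ler_pdivrMr ?mulr_gt0 // mulrC ler_pM2l ?pi_gt0 // -natrM ler_nat.
by have := ltn_ord i; lia.
Qed.

Lemma chebyshev_root_node (i : 'I_n) : root (chebyshev R n) (cos (uba_theta R i)).
Proof.
have n_neq0 : n%:R != 0 :> R by rewrite pnatr_eq0 -lt0n (leq_ltn_trans _ (ltn_ord i)).
apply/rootP; rewrite horner_chebyshev_cos uba_thetaE.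
have -> : n%:R * ((i.*2.+1)%:R * pi / (2 * n%:R)) = i%:R * pi + pi / 2 :> R.
  by rewrite -mul2n mulrS natrM; field.
by rewrite cosDpihalf sin_natmulpi oppr0.
Qed.

Lemma cos_uba_theta_inj : injective (fun i : 'I_n => cos (uba_theta R i)).
Proof.
have pi_neq0 : pi != 0 :> R by rewrite gt_eqF ?pi_gt0.
move=> i j /cos_inj; rewrite !uba_theta_itv => /(_ isT isT).
have n_neq0 : 2 * n%:R != 0 :> R.
  by rewrite mulf_neq0 // pnatr_eq0 -lt0n (leq_ltn_trans _ (ltn_ord i)).
rewrite !uba_thetaE => /(congr1 (fun x => x * (2 * n%:R) / pi)).
rewrite !divfK // !mulfK // => /eqP; rewrite eqr_nat eqSS -!muln2 eqn_mul2r /=.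
by move=> /eqP /val_inj.
Qed.

Lemma chebyshev_nodes_prod : exists2 k : R, k != 0 &
  chebyshev R n = k%:P * \prod_(i < n) ('X - (cos (uba_theta R i))%:P).
Proof.
set nodes := [seq cos (uba_theta R i) | i <- enum 'I_n].
have nodes_roots : all (root (chebyshev R n)) nodes.
  by apply/allP => _ /mapP[i _ ->]; exact: chebyshev_root_node.
have nodes_uniq : uniq nodes by rewrite map_inj_uniq ?enum_uniq //; exact: cos_uba_theta_inj.
have [q Tq] := uniq_roots_prod_XsubC nodes_roots (etrans (uniq_rootsE _) nodes_uniq).
have T_neq0 : chebyshev R n != 0.
  apply/eqP => T0; have := @horner_chebyshev_cos R n 0.
  by rewrite T0 horner0 mulr0 cos0 => /eqP; rewrite eq_sym oner_eq0.
have q_neq0 : q != 0 by apply: contra_neq T_neq0 => q0; rewrite Tq q0 mul0r.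
have size_q : (size q <= 1)%N.
  have := size_chebyshev R n; rewrite Tq size_mul //; last first.
    by rewrite -size_poly_eq0 size_prod_XsubC.
  by rewrite size_prod_XsubC size_map size_enum_ord addnS /= -(add1n n) leq_add2r.
exists q`_0; first by apply: contra_neq q_neq0 => q00; rewrite (size1_polyC size_q) q00.
by rewrite Tq -(size1_polyC size_q) big_map big_enum.
Qed.

End ChebyshevNodes.

Lemma horner_chebyshev_extremum (R : realType) n j : (j <= n)%N ->
  (chebyshev R n).[cos (j%:R * pi / n%:R)] = (-1) ^+ j.
Proof.
case: n => [|n] jn; first by move: jn; rewrite leqn0 => /eqP->; rewrite hornerC.
by rewrite horner_chebyshev_cos mulrC divfK ?cos_natmulpi ?pnatr_eq0.
Qed.

Lemma chebyshev_sqr_le1 (R : realType) n (x : R) : -1 <= x <= 1 ->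
  (chebyshev R n).[x] ^+ 2 <= 1.
Proof.
move=> x_itv; rewrite -[x](@acosK R) ?in_itv // horner_chebyshev_cos.
have := cos_le1 (n%:R * acos x); have := cos_geN1 (n%:R * acos x); nra.
Qed.

Lemma sqr_lt_sub_mul_lt0 (R : realDomainType) (u a b : R) :
  a ^+ 2 < u ^+ 2 -> b ^+ 2 < u ^+ 2 -> (u - a) * (- u - b) < 0.
Proof.
move=> au bu; have [u_ge0|u_lt0] := lerP 0 u.
  have a_lt : a < u by rewrite ltNge; apply/negP => ?; nra.
  have b_gt : - u < b by rewrite ltNge; apply/negP => ?; nra.
  nra.
have a_gt : u < a by rewrite ltNge; apply/negP => ?; nra.
have b_lt : b < - u by rewrite ltNge; apply/negP => ?; nra.
nra.
Qed.

Section SignChanges.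
Variables (R : rcfType) (n : nat) (r : {poly R}) (s : nat -> R).
Hypotheses (r_neq0 : r != 0) (r_root0 : root r 0) (s0_ge0 : 0 <= s 0%N).
Hypothesis s_incr : forall j k, (j < k <= n)%N -> s j < s k.
Hypothesis r_sign : forall j, (j < n)%N -> r.[s j] * r.[s j.+1] < 0.

Lemma sign_changes_size : (n.+1 < size r)%N.
Proof.
have /choice[rho rhoP] : forall j, exists x, (j < n)%N ->
    s j < x < s j.+1 /\ root r x.
  move=> j; case: (ltnP j n) => jn; last by exists 0.
  have s_step : s j < s j.+1 by apply: s_incr; rewrite ltnSn.
  have [x] := poly_ivtoo (ltW s_step) (r_sign jn).
  by rewrite in_itv /= => x_itv x_root; exists x.
have s_le j k : (j <= k <= n)%N -> s j <= s k.
  by case/andP; rewrite leq_eqVlt => /predU1P[-> //|jk kn]; rewrite ltW ?s_incr ?jk.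
have rho_gt0 j : (j < n)%N -> 0 < rho j.
  move=> jn; have /andP[sj _] := (rhoP j jn).1.
  by apply: (le_lt_trans s0_ge0); apply: (le_lt_trans _ sj); apply: s_le; exact: ltnW.
have rho_incr j k : (j < k < n)%N -> rho j < rho k.
  case/andP=> jk kn; have /andP[_ lt_j] := (rhoP j (ltn_trans jk kn)).1.
  have /andP[lt_k _] := (rhoP k kn).1.
  by rewrite (lt_trans lt_j) // (le_lt_trans _ lt_k) // s_le // jk ltnW.
rewrite ltnNge; apply: contra r_neq0 => size_r; apply/eqP.
apply: (@roots_geq_poly_eq0 _ r (0 :: [seq rho j | j <- iota 0 n])) => /=.
- rewrite r_root0 /=; apply/allP => x /mapP[j].
  by rewrite mem_iota => /andP[_ jn] ->; exact: (rhoP j jn).2.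
- apply/andP; split.
    apply/mapP => -[j]; rewrite mem_iota => /andP[_ /rho_gt0 rho_pos] rho0.
    by rewrite -rho0 ltxx in rho_pos.
  rewrite map_inj_in_uniq ?iota_uniq // => j k; rewrite !mem_iota => /andP[_ jn] /andP[_ kn].
  have [jk|kj|//] := ltngtP j k => /eqP.
    by rewrite lt_eqF // rho_incr // jk.
  by rewrite gt_eqF // rho_incr // kj.
- by rewrite size_map size_iota.
Qed.

End SignChanges.

Lemma alternation_sqr_ge (R : rcfType) n (p q : {poly R}) (s : nat -> R) (K : R) :
  (size p <= n.+1)%N -> (size q <= n.+1)%N -> p.[0] = q.[0] -> 0 <= s 0%N ->
  (forall j k, (j < k <= n)%N -> s j < s k) ->
  (forall j, (j <= n)%N -> p.[s j] = K * (-1) ^+ j) ->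
  exists2 j, (j <= n)%N & K ^+ 2 <= q.[s j] ^+ 2.
Proof.
move=> size_p size_q pq0 s0_ge0 s_incr p_alt; apply: contrapT => no_j.
have q_lt j : (j <= n)%N -> q.[s j] ^+ 2 < K ^+ 2.
  by move=> jn; rewrite ltNge; apply/negP => le_Kq; apply: no_j; exists j.
have r_neq0 : p - q != 0.
  apply/eqP => /eqP; rewrite subr_eq0 => /eqP pq; have := q_lt 0%N isT.
  by rewrite -pq p_alt // expr0 mulr1 ltxx.
have r_root0 : root (p - q) 0 by rewrite rootE !hornerE pq0 subrr.
have r_sign j : (j < n)%N -> (p - q).[s j] * (p - q).[s j.+1] < 0.
  move=> jn; rewrite !hornerD !hornerN !p_alt ?(ltnW jn) // exprS mulN1r mulrN.
  apply: sqr_lt_sub_mul_lt0; rewrite exprMn sqrr_sign mulr1 q_lt //; exact: ltnW.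
have := sign_changes_size r_neq0 r_root0 s0_ge0 s_incr r_sign.
by rewrite ltnNge (leq_trans (size_polyD _ _)) // geq_max size_polyN size_p size_q.
Qed.

Section SupOverInterval.
Local Open Scope classical_set_scope.
Variables (R : realType) (f : R -> R) (a b : R).

Lemma sup_image_itv_ge (x : R) : continuous f -> x \in `[a, b]%R ->
  f x <= sup [set f y | y in `[a, b]].
Proof.
move=> f_cont x_ab; have ab : a <= b by move: x_ab; rewrite in_itv /= => /andP[/le_trans]; apply.
have [c _ c_max] := EVT_max ab (continuous_subspaceT f_cont).
apply: ub_le_sup; last by exists x.
by exists (f c) => _ [y y_ab <-]; apply: c_max.
Qed.

Lemma sup_image_itv_le (M : R) : a <= b -> (forall y, y \in `[a, b]%R -> f y <= M) ->
  sup [set f y | y in `[a, b]] <= M.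
Proof.
move=> ab f_le; apply: ge_sup; first by exists (f a), a; rewrite //= in_itv /= lexx ab.
by move=> _ [y y_ab <-]; apply: f_le.
Qed.

End SupOverInterval.

Definition residual_poly (R : nzRingType) n (a : 'I_n -> R) : {poly R} :=
  \prod_(i < n) (1 - a i *: 'X).

Lemma horner_residual_poly (R : comNzRingType) n (a : 'I_n -> R) x :
  (residual_poly a).[x] = \prod_(i < n) (1 - a i * x).
Proof. by rewrite horner_prod; apply: eq_bigr => i _; rewrite !hornerE. Qed.

Lemma residual_poly0 (R : comNzRingType) n (a : 'I_n -> R) : (residual_poly a).[0] = 1.
Proof. by rewrite horner_residual_poly big1 // => i _; rewrite mulr0 subr0. Qed.

Lemma size_residual_poly (R : nzRingType) n (a : 'I_n -> R) :
  (size (residual_poly a) <= n.+1)%N.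
Proof.
elim: n a => [|n IH] a; first by rewrite /residual_poly big_ord0 size_poly1.
rewrite /residual_poly big_ord_recr /= (leq_trans (size_mul_leq _ _)) //.
have size_factor : (size (1 - a ord_max *: 'X)%R <= 2)%N.
  rewrite (leq_trans (size_polyD _ _)) // geq_max size_poly1 size_polyN.
  by rewrite (leq_trans (size_scale_leq _ _)) // size_polyX.
have := leq_add (IH (fun i => a (widen_ord (leqnSn n) i))) size_factor.
by rewrite addn2 -subn1 leq_subLR add1n.
Qed.

Definition uba_step (R : realType) (ll lu : R) n (eta : 'I_n -> R) (i : 'I_n) : R :=
  (ll^-1 - lu^-1) * eta i + lu^-1.

Lemma uba_objE (R : realType) (ll lu : R) n (eta : 'I_n -> R) lam :
  uba_obj ll lu eta lam = (residual_poly (uba_step ll lu eta)).[lam] ^+ 2.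
Proof. by rewrite horner_residual_poly /uba_obj prodrXl. Qed.

Lemma continuous_uba_obj (R : realType) (ll lu : R) n (eta : 'I_n -> R) :
  continuous (uba_obj ll lu eta).
Proof.
have -> : uba_obj ll lu eta = horner (residual_poly (uba_step ll lu eta) ^+ 2).
  by apply/funext => lam; rewrite uba_objE horner_exp.
exact: continuous_horner.
Qed.

Section UBA.
Variables (R : realType) (ll lu : R) (n : nat).
Hypotheses (ll_gt0 : 0 < ll) (ll_lt_lu : ll < lu).

Definition cheb_arg (lam : R) : R := ((lu + ll) / 2 - lam) / ((lu - ll) / 2).

Definition uba_alternant (j : nat) : R :=
  (lu + ll) / 2 - (lu - ll) / 2 * cos (j%:R * pi / n%:R).

Let radius_gt0 : 0 < (lu - ll) / 2. Proof. by rewrite divr_gt0 // subr_gt0. Qed.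

Lemma cheb_arg_itv lam : ll <= lam <= lu -> -1 <= cheb_arg lam <= 1.
Proof.
case/andP=> ? ?; apply/andP; split; have := ll_lt_lu.
  by rewrite /cheb_arg ler_pdivlMr //; lra.
by rewrite /cheb_arg ler_pdivrMr //; lra.
Qed.

Lemma cheb_arg_alternant j : cheb_arg (uba_alternant j) = cos (j%:R * pi / n%:R).
Proof. by rewrite /cheb_arg /uba_alternant; field; rewrite subr_eq0 gt_eqF. Qed.

Lemma uba_alternant_itv j : ll <= uba_alternant j <= lu.
Proof.
have c_le1 := cos_le1 (j%:R * pi / n%:R : R).
have c_geN1 := cos_geN1 (j%:R * pi / n%:R : R).
rewrite /uba_alternant; apply/andP; split; have := ll_lt_lu; nra.
Qed.

Lemma uba_alternant0 : uba_alternant 0 = ll.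
Proof. by rewrite /uba_alternant !mul0r cos0; field. Qed.

Lemma uba_alternant_incr j k : (j < k <= n)%N -> uba_alternant j < uba_alternant k.
Proof.
case/andP=> jk kn; have n_gt0 : 0 < n%:R :> R by rewrite ltr0n; lia.
have angle_itv m : (m <= n)%N -> (m%:R * pi / n%:R : R) \in `[0, pi].
  move=> mn; rewrite in_itv /= divr_ge0 ?mulr_ge0 ?pi_ge0 //=.
  by rewrite ler_pdivrMr // mulrC ler_pM2l ?pi_gt0 // ler_nat.
rewrite /uba_alternant ltrD2l ltrN2 ltr_pM2l // ltr_cos ?angle_itv //; last lia.
by rewrite ltr_pM2r ?invr_gt0 // ltr_pM2r ?pi_gt0 // ltr_nat.
Qed.

Let uba_denom_gt0 (c : R) : -1 <= c <= 1 ->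
  0 < 2 * (2 * lu / ll) + (2 - 2 * lu / ll) * (1 + c).
Proof.
case/andP=> c_geN1 c_le1; have : 2 < 2 * lu / ll by rewrite ltr_pdivlMr // ltr_pM2l.
by move: (2 * lu / ll) => phi; nra.
Qed.

Let node_gt0 (c : R) : -1 <= c <= 1 -> 0 < (lu + ll) / 2 - (lu - ll) / 2 * c.
Proof.
case/andP=> _ c_le1; have : 0 <= 1 - c by rewrite subr_ge0.
by move/(mulr_ge0 (ltW radius_gt0)); have := ll_gt0; lra.
Qed.

Lemma uba_eta_itv (i : 'I_n) : 0 <= uba_eta ll lu n i <= 1.
Proof.
have c_itv := cos_itv (uba_theta R i).
have := uba_denom_gt0 c_itv; have : 2 < 2 * lu / ll by rewrite ltr_pdivlMr // ltr_pM2l.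
move: c_itv; rewrite /uba_eta; move: (2 * lu / ll) (cos (uba_theta R i)) => phi c.
case/andP=> c_geN1 c_le1 phi_gt2 den_gt0.
by rewrite divr_ge0 ?ler_pdivrMr //=; nra.
Qed.

Lemma uba_step_eta (i : 'I_n) : uba_step ll lu (uba_eta ll lu n) i =
  ((lu + ll) / 2 - (lu - ll) / 2 * cos (uba_theta R i))^-1.
Proof.
have c_itv := cos_itv (uba_theta R i).
have := node_gt0 c_itv; have := uba_denom_gt0 c_itv; rewrite /uba_step /uba_eta.
move: (cos (uba_theta R i)) => c den_gt0 c_node_gt0.
have lu_gt0 : 0 < lu := lt_trans ll_gt0 ll_lt_lu.
field.
have -> : 2 * (2 * lu) + (2 * ll - 2 * lu) * (1 + c) =
          ll * (2 * (2 * lu / ll) + (2 - 2 * lu / ll) * (1 + c)) by field; rewrite gt_eqF.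
have -> : lu + ll - (lu - ll) * c = 2 * ((lu + ll) / 2 - (lu - ll) / 2 * c) by field.
by rewrite !mulf_neq0 ?gt_eqF.
Qed.

Lemma residual_uba_eta_chebyshev : exists K : R, forall lam,
  (residual_poly (uba_step ll lu (uba_eta ll lu n))).[lam] = K * (chebyshev R n).[cheb_arg lam].
Proof.
have [k k_neq0 Tk] := chebyshev_nodes_prod R n.
pose node (i : 'I_n) := (lu + ll) / 2 - (lu - ll) / 2 * cos (uba_theta R i).
exists ((\prod_(i < n) ((lu - ll) / 2 / node i)) / k) => lam.
rewrite horner_residual_poly Tk hornerM hornerC horner_prod mulrA divfK // -big_split /=.
apply: eq_bigr => i _; rewrite uba_step_eta !hornerE.
have node_i_gt0 : 0 < node i := node_gt0 (cos_itv (uba_theta R i)).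
rewrite /cheb_arg /node in node_i_gt0 *; field.
by rewrite subr_eq0 gt_eqF //=; apply: lt0r_neq0; lra.
Qed.

Section Extremality.
Variable K : R.
Hypothesis residual_etaE : forall lam,
  (residual_poly (uba_step ll lu (uba_eta ll lu n))).[lam] = K * (chebyshev R n).[cheb_arg lam].

Lemma uba_obj_eta_le lam : ll <= lam <= lu -> uba_obj ll lu (uba_eta ll lu n) lam <= K ^+ 2.
Proof.
move=> /cheb_arg_itv /(chebyshev_sqr_le1 n) T_le1.
by rewrite uba_objE residual_etaE exprMn ler_piMr ?sqr_ge0.
Qed.

Lemma uba_obj_alternant_ge (eta : 'I_n -> R) :
  exists2 j, (j <= n)%N & K ^+ 2 <= uba_obj ll lu eta (uba_alternant j).
Proof.
suff [j jn K_le] : exists2 j, (j <= n)%N &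
    K ^+ 2 <= (residual_poly (uba_step ll lu eta)).[uba_alternant j] ^+ 2.
  by exists j; rewrite // uba_objE.
apply: (@alternation_sqr_ge R n (residual_poly (uba_step ll lu (uba_eta ll lu n))) _
  uba_alternant).
- exact: size_residual_poly.
- exact: size_residual_poly.
- by rewrite !residual_poly0.
- by rewrite uba_alternant0 ltW.
- exact: uba_alternant_incr.
- by move=> j jn; rewrite residual_etaE cheb_arg_alternant horner_chebyshev_extremum.
Qed.

End Extremality.
End UBA.

Theorem proposition1 (R : realType) (ll lu : R) (n : nat)
  (hll : 0 < ll) (hlu : ll < lu) (hn : (1 <= n)%N) :
  (forall i : 'I_n, 0 <= uba_eta ll lu n i <= 1) /\
  (forall eta : 'I_n -> R, uba_F ll lu (uba_eta ll lu n) <= uba_F ll lu eta).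
Proof.
split=> [|eta]; first exact: uba_eta_itv.
have [K residual_etaE] := residual_uba_eta_chebyshev n hll hlu.
have [j _ K_le] := uba_obj_alternant_ge hll hlu residual_etaE eta.
apply: (@le_trans _ _ (K ^+ 2)).
  apply: sup_image_itv_le; first exact: ltW.
  by move=> lam; rewrite in_itv => /(uba_obj_eta_le hlu residual_etaE).
apply: (le_trans K_le); apply: sup_image_itv_ge; first exact: continuous_uba_obj.
by rewrite in_itv uba_alternant_itv.
Qed.
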